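(* For every $m\in\mathbb{Z}$: (i) $s_2s_1^ms_2\in U$; (ii) $s_2^{-1}s_1^ms_2^{-1}\in U'$; (iii) $s_2^{-2}s_1^ms_2^{-1}\in U'$.
   Context: Let $B_3=\langle s_1,s_2\mid s_1s_2s_1=s_2s_1s_2\rangle$, $R_4=\mathbb{Z}[a,b,c,d,d^{-1}]$, and let $H_4$ be the quotient of the group algebra $R_4B_3$ by the relations $s_i^4=as_i^3+bs_i^2+cs_i+d$ for $i=1,2$; identify $s_i$ with their images in $H_4$. For $i=1,2$ let $u_i$ be the $R_4$-subalgebra of $H_4$ generated by $s_i$. For $R_4$-submodules (or elements) $X_1,\dots,X_n$ of $H_4$, $X_1\cdots X_n$ denotes the $R_4$-submodule spanned by all products $x_1\cdots x_n$ with $x_j\in X_j$, and sums are sums of submodules. Define $U'=u_1u_2u_1+u_1s_2s_1^{-1}s_2u_1+u_1s_2^{-1}s_1s_2^{-1}u_1+u_1s_2^{-1}s_1^{-2}s_2^{-1}$ and $U=U'+u_1s_2s_1^{-2}s_2u_1+u_1s_2^{-2}s_1^{-2}s_2^{-2}u_1$. *)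

From mathcomp Require Import all_boot all_order all_algebra.
Set Implicit Arguments. Unset Strict Implicit. Unset Printing Implicit Defensive.
Import GRing.Theory.
Local Open Scope ring_scope.

Section Submodules.
Variables (R : comUnitRingType) (A : algType R).

Definition rspan (P : A -> Prop) : A -> Prop :=
  fun x => exists s : seq (R * A),
    (forall p, p \in s -> P p.2) /\ x = \sum_(p <- s) p.1 *: p.2.

Definition prodS (Xs : seq (A -> Prop)) : A -> Prop :=
  rspan (fun w => exists xs : seq A,
    size xs = size Xs /\
    (forall i, (i < size Xs)%N -> nth (fun _ => False) Xs i (nth 0 xs i)) /\
    w = \prod_(x <- xs) x).

Definition addS (X Y : A -> Prop) : A -> Prop :=
  fun z => exists x y, X x /\ Y y /\ z = x + y.

Definition elt (e : A) : A -> Prop := fun x => x = e.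

Definition subalg1 (s : A) : A -> Prop := rspan (fun x => exists n : nat, x = s ^+ n).

(* integer power of s, given its inverse t *)
Definition ipow (s t : A) (m : int) : A :=
  match m with Posz n => s ^+ n | Negz n => t ^+ n.+1 end.

(* U' and U of the paper; t1, t2 are the inverses of s1, s2 *)
Definition Uprime (s1 s2 t1 t2 : A) : A -> Prop :=
  let u1 := subalg1 s1 in let u2 := subalg1 s2 in
  addS (addS (addS
    (prodS [:: u1; u2; u1])
    (prodS [:: u1; elt s2; elt t1; elt s2; u1]))
    (prodS [:: u1; elt t2; elt s1; elt t2; u1]))
    (prodS [:: u1; elt t2; elt (t1 ^+ 2); elt t2]).

Definition Ufull (s1 s2 t1 t2 : A) : A -> Prop :=
  let u1 := subalg1 s1 in
  addS (addS (Uprime s1 s2 t1 t2)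
    (prodS [:: u1; elt s2; elt (t1 ^+ 2); elt s2; u1]))
    (prodS [:: u1; elt (t2 ^+ 2); elt (t1 ^+ 2); elt (t2 ^+ 2); u1]).

End Submodules.

(* Write t1, t2 for the inverses of s1, s2.  Multiplying the quartic relation by
   powers of s expresses s^(n+4) through s^(n+3), ..., s^n, and, since its constant
   term d is a unit, t^(n+4) through t^(n+3), ..., t^n.  Hence every integer power
   of s lies in each R-submodule containing t^2, t, 1 and s, and each claim only
   has to be checked for s1^m with m = -2, -1, 0, 1, where it follows from the
   braid relation.  For (iii) the quartic for s2 first writes t2^2 through s2^2,
   s2, 1 and t2; the resulting terms reduce to (ii) and to the identity
   s2 s1^m t2 = t1 s2^m s1, which is the braid relation conjugated into
   s2 s1 t2 = t1 s2 s1 and raised to the m-th power. *)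

From mathcomp Require Import all_boot all_order all_algebra.
Set Implicit Arguments. Unset Strict Implicit. Unset Printing Implicit Defensive.
Import GRing.Theory.
Local Open Scope ring_scope.

Lemma nat_ind4 (P : nat -> Prop) : P 0 -> P 1 -> P 2 -> P 3 ->
  (forall n, P n -> P n.+1 -> P n.+2 -> P n.+3 -> P n.+4) -> forall n, P n.
Proof.
move=> P0 P1 P2 P3 PS n.
suff: [/\ P n, P n.+1, P n.+2 & P n.+3] by case.
by elim: n => [|n [Pn Pn1 Pn2 Pn3]]; split => //; apply: PS.
Qed.

Lemma mulrK1 (R : pzRingType) (x y z : R) : x * y = 1 -> z * x * y = z.
Proof. by move=> xy; rewrite -mulrA xy mulr1. Qed.

Lemma exprDK (R : pzRingType) (x y : R) n k :
  x * y = 1 -> x ^+ (n + k) * y ^+ k = x ^+ n.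
Proof.
move=> xy; elim: k => [|k IHk]; first by rewrite addn0 mulr1.
by rewrite addnS exprSr exprS mulrA (mulrK1 _ xy) IHk.
Qed.

Lemma linv_rinv_eq (R : pzRingType) (x y z : R) : x * y = 1 -> z * x = 1 -> z = y.
Proof. by move=> xy zx; rewrite -[z]mulr1 -xy mulrA zx mul1r. Qed.

Lemma conj_exp (R : pzRingType) (u v x : R) n :
  u * v = 1 -> v * u = 1 -> u * x ^+ n * v = (u * x * v) ^+ n.
Proof.
move=> uv vu; elim: n => [|n IHn]; first by rewrite mulr1.
by rewrite !exprSr -IHn !mulrA (mulrK1 _ vu).
Qed.

Lemma eq_scale_unit (R : comUnitRingType) (A : lmodType R) (d : R) (x y z : A) :
  d \is a GRing.unit -> x = y + d *: z -> z = d^-1 *: (x - y).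
Proof. by move=> du ->; rewrite addrC addKr scalerA mulVr // scale1r. Qed.

Section Submodules.
Variables (R : comUnitRingType) (A : algType R).
Implicit Types (P Q X Y : A -> Prop) (s x y z : A).

Definition closedS Q :=
  [/\ Q 0, (forall x y, Q x -> Q y -> Q (x + y)) & (forall k x, Q x -> Q (k *: x))].

Lemma closedD Q x y : closedS Q -> Q x -> Q y -> Q (x + y).
Proof. by case=> _ QD _; apply: QD. Qed.

Lemma closedZ Q k x : closedS Q -> Q x -> Q (k *: x).
Proof. by case=> _ _ QZ; apply: QZ. Qed.

Lemma closedN Q x : closedS Q -> Q x -> Q (- x).
Proof. by move=> hQ Qx; rewrite -scaleN1r; apply: closedZ. Qed.

Lemma closedS_mulr Q y : closedS Q -> closedS (fun x => Q (x * y)).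
Proof.
case=> Q0 QD QZ; split; first by rewrite mul0r.
- by move=> x z Qx Qz; rewrite mulrDl; apply: QD.
- by move=> k x Qx; rewrite -scalerAl; apply: QZ.
Qed.

Lemma closedS_mull Q y : closedS Q -> closedS (fun x => Q (y * x)).
Proof.
case=> Q0 QD QZ; split; first by rewrite mulr0.
- by move=> x z Qx Qz; rewrite mulrDr; apply: QD.
- by move=> k x Qx; rewrite -scalerAr; apply: QZ.
Qed.

Lemma closedS_conj Q y z : closedS Q -> closedS (fun x => Q (y * x * z)).
Proof. by move=> hQ; apply: (closedS_mull y (closedS_mulr z hQ)). Qed.

Lemma rspan_closed P : closedS (rspan P).
Proof.
split.
- by exists [::]; rewrite big_nil.
- move=> _ _ [s [Ps ->]] [t [Pt ->]]; exists (s ++ t); split; last by rewrite big_cat.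
  by move=> p; rewrite mem_cat => /orP [] ?; [apply: Ps | apply: Pt].
- move=> k _ [s [Ps ->]]; exists [seq (k * p.1, p.2) | p <- s]; split.
    by move=> q /mapP [p ps ->] /=; apply: Ps.
  by rewrite big_map scaler_sumr; apply: eq_bigr => p _; rewrite scalerA.
Qed.

Lemma rspan_sub P x : P x -> rspan P x.
Proof.
move=> Px; exists [:: (1, x)]; split; last by rewrite big_seq1 scale1r.
by move=> p; rewrite mem_seq1 => /eqP ->.
Qed.

Lemma rspan_ind P Q : closedS Q -> (forall x, P x -> Q x) -> forall x, rspan P x -> Q x.
Proof.
case=> Q0 QD QZ PQ _ [s [Ps ->]].
elim: s Ps => [|p s IHs] Ps; first by rewrite big_nil.
rewrite big_cons; apply: QD; first by apply/QZ/PQ/Ps; rewrite mem_head.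
by apply: IHs => q sq; apply: Ps; rewrite in_cons sq orbT.
Qed.

Lemma rspan_mul P x y : (forall x y, P x -> P y -> rspan P (x * y)) ->
  rspan P x -> rspan P y -> rspan P (x * y).
Proof.
move=> PM Px Py.
apply: (rspan_ind (closedS_mulr y (rspan_closed P)) _ Px) => {Px}x Px.
by apply: (rspan_ind (closedS_mull x (rspan_closed P)) _ Py) => {Py}y Py; apply: PM.
Qed.

Lemma addS_closed X Y : closedS X -> closedS Y -> closedS (addS X Y).
Proof.
case=> X0 XD XZ [Y0 YD YZ]; split; first by exists 0, 0; rewrite addr0.
- move=> _ _ [x1 [y1 [Xx1 [Yy1 ->]]]] [x2 [y2 [Xx2 [Yy2 ->]]]].
  by exists (x1 + x2), (y1 + y2); rewrite addrACA; split; [apply: XD | split; [apply: YD|]].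
- move=> k _ [x [y [Xx [Yy ->]]]].
  by exists (k *: x), (k *: y); rewrite scalerDr; split; [apply: XZ | split; [apply: YZ|]].
Qed.

Lemma addSl X Y x : closedS Y -> X x -> addS X Y x.
Proof. by case=> Y0 _ _ Xx; exists x, 0; rewrite addr0. Qed.

Lemma addSr X Y y : closedS X -> Y y -> addS X Y y.
Proof. by case=> X0 _ _ Yy; exists 0, y; rewrite add0r. Qed.

Lemma prodS_closed Xs : closedS (prodS Xs).
Proof. exact: rspan_closed. Qed.

Lemma prodS3 X1 X2 X3 x1 x2 x3 :
  X1 x1 -> X2 x2 -> X3 x3 -> prodS [:: X1; X2; X3] (x1 * x2 * x3).
Proof.
move=> ? ? ?; apply: rspan_sub; exists [:: x1; x2; x3]; do 2 split => //.
  by case=> [|[|[|i]]].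
by rewrite !big_cons big_nil mulr1 !mulrA.
Qed.

Lemma prodS4 X1 X2 X3 X4 x1 x2 x3 x4 :
  X1 x1 -> X2 x2 -> X3 x3 -> X4 x4 -> prodS [:: X1; X2; X3; X4] (x1 * x2 * x3 * x4).
Proof.
move=> ? ? ? ?; apply: rspan_sub; exists [:: x1; x2; x3; x4]; do 2 split => //.
  by case=> [|[|[|[|i]]]].
by rewrite !big_cons big_nil mulr1 !mulrA.
Qed.

Lemma prodS5 X1 X2 X3 X4 X5 x1 x2 x3 x4 x5 :
  X1 x1 -> X2 x2 -> X3 x3 -> X4 x4 -> X5 x5 ->
  prodS [:: X1; X2; X3; X4; X5] (x1 * x2 * x3 * x4 * x5).
Proof.
move=> ? ? ? ? ?; apply: rspan_sub; exists [:: x1; x2; x3; x4; x5]; do 2 split => //.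
  by case=> [|[|[|[|[|i]]]]].
by rewrite !big_cons big_nil mulr1 !mulrA.
Qed.

Lemma subalg1_closed s : closedS (subalg1 s).
Proof. exact: rspan_closed. Qed.

Lemma subalg1_exp s n : subalg1 s (s ^+ n).
Proof. by apply: rspan_sub; exists n. Qed.

Lemma subalg1_1 s : subalg1 s 1.
Proof. exact: subalg1_exp s 0. Qed.

Lemma subalg1_id s : subalg1 s s.
Proof. exact: subalg1_exp s 1. Qed.

Lemma subalg1_mul s x y : subalg1 s x -> subalg1 s y -> subalg1 s (x * y).
Proof. by apply: rspan_mul => _ _ [m ->] [n ->]; rewrite -exprD; apply: subalg1_exp. Qed.

End Submodules.

Ltac closedS_lin hQ :=
  repeat first [apply: (closedD hQ) | apply: (closedN hQ) | apply: (closedZ _ hQ)].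




Lemma conj_ipow (R : comUnitRingType) (A : algType R) (u v s t : A) m :
  u * v = 1 -> v * u = 1 -> u * ipow s t m * v = ipow (u * s * v) (u * t * v) m.
Proof. by move=> uv vu; case: m => n; apply: conj_exp. Qed.

Section UnitQuartic.
Variables (R : comUnitRingType) (A : algType R) (a b c d : R) (s t : A).
Hypotheses (du : d \is a GRing.unit) (st : s * t = 1) (ts : t * s = 1).
Hypothesis quartic : s ^+ 4 = a *: s ^+ 3 + b *: s ^+ 2 + c *: s + d%:A.

Lemma quartic_shift n :
  s ^+ n.+4 = a *: s ^+ n.+3 + b *: s ^+ n.+2 + c *: s ^+ n.+1 + d *: s ^+ n.
Proof.
by rewrite -addn4 exprD quartic !mulrDr -!scalerAr mulr1 -exprSr -!exprD addn3 addn2.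
Qed.

Lemma quartic_inv_shift n :
  t ^+ n = a *: t ^+ n.+1 + b *: t ^+ n.+2 + c *: t ^+ n.+3 + d *: t ^+ n.+4.
Proof.
rewrite -{1}(exprDK n 4 ts) quartic !mulrDr -!scalerAr mulr1.
by rewrite -addSnnS exprDK // -addSnnS exprDK // -addSnnS (exprDK _ 1) // addn1.
Qed.

Lemma quartic_cube : s ^+ 3 = a *: s ^+ 2 + b *: s + c%:A + d *: t.
Proof.
rewrite -(exprDK 3 1 st) quartic !mulrDl -!scalerAl mul1r.
by rewrite (exprDK 2 1) // (exprDK 1 1) // st.
Qed.

Lemma quartic_sqr : s ^+ 2 = a *: s + b%:A + c *: t + d *: t ^+ 2.
Proof.
rewrite -(exprDK 2 1 st) quartic_cube !mulrDl -!scalerAl mul1r.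
by rewrite (exprDK 1 1) // st expr2.
Qed.

Lemma closed_ipow (G : A -> Prop) : closedS G ->
  G (t ^+ 2) -> G t -> G 1 -> G s -> forall m, G (ipow s t m).
Proof.
move=> hG Gt2 Gt G1 Gs [n|n] /=.
  suff Gst k : G (s ^+ k * t ^+ 2) by rewrite -(exprDK n 2 st); apply: Gst.
  elim/nat_ind4: k => [||||k Gk Gk1 Gk2 Gk3].
  - by rewrite mul1r.
  - by rewrite expr1 expr2 mulrA st mul1r.
  - by rewrite (exprDK 0 2 st).
  - by rewrite (exprDK 1 2 st).
  by rewrite quartic_shift !mulrDl -!scalerAl; closedS_lin hG.
have tsK k : t ^+ k.+1 * s = t ^+ k by rewrite exprSr -mulrA ts mulr1.
suff Gts k : G (t ^+ k * s) by rewrite -tsK; apply: Gts.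
elim/nat_ind4: k => [||||k Gk Gk1 Gk2 Gk3]; try by rewrite ?mul1r ?tsK.
rewrite (eq_scale_unit du (quartic_inv_shift k)) -scalerAl mulrBl !mulrDl -!scalerAl.
by closedS_lin hG.
Qed.

Lemma subalg1_inv : subalg1 s t.
Proof.
have hS := subalg1_closed s.
rewrite (eq_scale_unit du quartic_cube); closedS_lin hS.
- exact: subalg1_exp.
- exact: subalg1_exp.
- exact: subalg1_id.
- exact: subalg1_1.
Qed.

Lemma subalg1_ipow m : subalg1 s (ipow s t m).
Proof.
apply: closed_ipow.
- exact: subalg1_closed.
- by rewrite expr2; apply: subalg1_mul; apply: subalg1_inv.
- exact: subalg1_inv.
- exact: subalg1_1.
- exact: subalg1_id.
Qed.

End UnitQuartic.

Section UMembership.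
Variables (R : comUnitRingType) (A : algType R) (s1 s2 t1 t2 : A).
Implicit Types x y z : A.

Lemma Uprime_closed : closedS (Uprime s1 s2 t1 t2).
Proof. by rewrite /Uprime /=; repeat apply: addS_closed; apply: prodS_closed. Qed.

Lemma Ufull_closed : closedS (Ufull s1 s2 t1 t2).
Proof.
by rewrite /Ufull /=; repeat apply: addS_closed; apply: Uprime_closed || apply: prodS_closed.
Qed.

Lemma Uprime_u1u2u1 x y z : subalg1 s1 x -> subalg1 s2 y -> subalg1 s1 z ->
  Uprime s1 s2 t1 t2 (x * y * z).
Proof.
by move=> *; rewrite /Uprime /=; repeat apply: addSl; by [apply: prodS_closed | apply: prodS3].
Qed.

Lemma Uprime_s2t1s2 x y : subalg1 s1 x -> subalg1 s1 y ->
  Uprime s1 s2 t1 t2 (x * s2 * t1 * s2 * y).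
Proof.
move=> *; rewrite /Uprime /=; apply: addSl; first exact: prodS_closed.
apply: addSl; first exact: prodS_closed.
by apply: addSr; [apply: prodS_closed | apply: prodS5].
Qed.

Lemma Uprime_t2s1t2 x y : subalg1 s1 x -> subalg1 s1 y ->
  Uprime s1 s2 t1 t2 (x * t2 * s1 * t2 * y).
Proof.
move=> *; rewrite /Uprime /=; apply: addSl; first exact: prodS_closed.
by apply: addSr; [apply: addS_closed; apply: prodS_closed | apply: prodS5].
Qed.

Lemma Uprime_t2t1t1t2 x : subalg1 s1 x -> Uprime s1 s2 t1 t2 (x * t2 * t1 ^+ 2 * t2).
Proof.
move=> *; rewrite /Uprime /=; apply: addSr; last exact: prodS4.
by repeat apply: addS_closed; apply: prodS_closed.
Qed.

Lemma Ufull_Uprime x : Uprime s1 s2 t1 t2 x -> Ufull s1 s2 t1 t2 x.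
Proof. by move=> *; rewrite /Ufull /=; do 2 (apply: addSl; first exact: prodS_closed). Qed.

Lemma Ufull_s2t1t1s2 x y : subalg1 s1 x -> subalg1 s1 y ->
  Ufull s1 s2 t1 t2 (x * s2 * t1 ^+ 2 * s2 * y).
Proof.
move=> *; rewrite /Ufull /=; apply: addSl; first exact: prodS_closed.
by apply: addSr; [apply: Uprime_closed | apply: prodS5].
Qed.

End UMembership.





Section Braid.
Variables (R : pzRingType) (s1 s2 t1 t2 : R).
Hypotheses (s1t1 : s1 * t1 = 1) (t1s1 : t1 * s1 = 1) (s2t2 : s2 * t2 = 1) (t2s2 : t2 * s2 = 1).
Hypothesis braid : s1 * s2 * s1 = s2 * s1 * s2.

Lemma braid_inv : t2 * t1 * t2 = t1 * t2 * t1.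
Proof.
apply: (@linv_rinv_eq _ (s1 * s2 * s1)).
  by rewrite !mulrA (mulrK1 _ s1t1) (mulrK1 _ s2t2) s1t1.
by rewrite braid !mulrA (mulrK1 _ t2s2) (mulrK1 _ t1s1) t2s2.
Qed.

Lemma braid_conj : s2 * s1 * t2 = t1 * s2 * s1.
Proof.
have := congr1 (fun x => t1 * x * t2) braid.
by rewrite /= !mulrA t1s1 mul1r (mulrK1 _ s2t2).
Qed.

Lemma braid_conj_inv : s2 * t1 * t2 = t1 * t2 * s1.
Proof.
apply/esym/(@linv_rinv_eq _ (s2 * s1 * t2)).
  by rewrite !mulrA (mulrK1 _ t2s2) (mulrK1 _ s1t1) s2t2.
by rewrite braid_conj !mulrA (mulrK1 _ s1t1) (mulrK1 _ t2s2) t1s1.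
Qed.

End Braid.

Section BraidQuartic.
Variables (R : comUnitRingType) (A : algType R) (a b c d : R) (s1 s2 t1 t2 : A).
Hypothesis du : d \is a GRing.unit.
Hypotheses (s1t1 : s1 * t1 = 1) (t1s1 : t1 * s1 = 1) (s2t2 : s2 * t2 = 1) (t2s2 : t2 * s2 = 1).
Hypothesis braid : s1 * s2 * s1 = s2 * s1 * s2.
Hypothesis quartic1 : s1 ^+ 4 = a *: s1 ^+ 3 + b *: s1 ^+ 2 + c *: s1 + d%:A.
Hypothesis quartic2 : s2 ^+ 4 = a *: s2 ^+ 3 + b *: s2 ^+ 2 + c *: s2 + d%:A.

Let U' := Uprime s1 s2 t1 t2.
Let U := Ufull s1 s2 t1 t2.

Let u1_t1 : subalg1 s1 t1 := subalg1_inv du s1t1 quartic1.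
Let u2_t2 : subalg1 s2 t2 := subalg1_inv du s2t2 quartic2.
Local Hint Resolve subalg1_1 subalg1_id subalg1_exp u1_t1 u2_t2 : core.

Lemma conj_s2_ipow m : s2 * ipow s1 t1 m * t2 = t1 * ipow s2 t2 m * s1.
Proof.
rewrite conj_ipow // (braid_conj t1s1 s2t2 braid).
by rewrite (braid_conj_inv s1t1 t1s1 s2t2 t2s2 braid) -conj_ipow.
Qed.

Lemma Ufull_s2_ipow_s2 m : U (s2 * ipow s1 t1 m * s2).
Proof.
apply: (closed_ipow du s1t1 t1s1 quartic1 (G := fun x => U (s2 * x * s2))).
- exact: closedS_conj (Ufull_closed _ _ _ _).
- have -> : s2 * t1 ^+ 2 * s2 = 1 * s2 * t1 ^+ 2 * s2 * 1 by rewrite mul1r mulr1.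
  exact: Ufull_s2t1t1s2.
- have -> : s2 * t1 * s2 = 1 * s2 * t1 * s2 * 1 by rewrite mul1r mulr1.
  exact/Ufull_Uprime/Uprime_s2t1s2.
- have -> : s2 * 1 * s2 = 1 * s2 ^+ 2 * 1 by rewrite mul1r !mulr1 expr2.
  exact/Ufull_Uprime/Uprime_u1u2u1.
by rewrite -braid; apply/Ufull_Uprime/Uprime_u1u2u1.
Qed.

Lemma Uprime_t2_ipow_t2 m : U' (t2 * ipow s1 t1 m * t2).
Proof.
apply: (closed_ipow du s1t1 t1s1 quartic1 (G := fun x => U' (t2 * x * t2))).
- exact: closedS_conj (Uprime_closed _ _ _ _).
- have -> : t2 * t1 ^+ 2 * t2 = 1 * t2 * t1 ^+ 2 * t2 by rewrite mul1r.
  exact: Uprime_t2t1t1t2.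
- by rewrite (braid_inv s1t1 t1s1 s2t2 t2s2 braid); apply: Uprime_u1u2u1.
- rewrite mulr1 -[t2 * t2]mul1r -[1 * _]mulr1.
  by apply: Uprime_u1u2u1 => //; apply: subalg1_mul.
have -> : t2 * s1 * t2 = 1 * t2 * s1 * t2 * 1 by rewrite mul1r mulr1.
exact: Uprime_t2s1t2.
Qed.

Lemma Uprime_ipow_t2 m : U' (ipow s1 t1 m * t2).
Proof.
rewrite -[_ * t2]mulr1; apply: Uprime_u1u2u1 => //.
exact: subalg1_ipow du s1t1 t1s1 quartic1 m.
Qed.

Lemma Uprime_s2_ipow_t2 m : U' (s2 * ipow s1 t1 m * t2).
Proof.
rewrite conj_s2_ipow; apply: Uprime_u1u2u1 => //.
exact: subalg1_ipow du s2t2 t2s2 quartic2 m.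
Qed.

Lemma Uprime_s2s2_ipow_t2 m : U' (s2 ^+ 2 * ipow s1 t1 m * t2).
Proof.
have -> : s2 ^+ 2 * ipow s1 t1 m * t2 = s2 * (s2 * ipow s1 t1 m * t2).
  by rewrite expr2 !mulrA.
rewrite conj_s2_ipow !mulrA.
apply: (closed_ipow du s2t2 t2s2 quartic2 (G := fun x => U' (s2 * t1 * x * s1))).
- exact: closedS_conj (Uprime_closed _ _ _ _).
- rewrite expr2 mulrA (braid_conj_inv s1t1 t1s1 s2t2 t2s2 braid).
  exact: Uprime_t2s1t2.
- rewrite (braid_conj_inv s1t1 t1s1 s2t2 t2s2 braid) -(mulrA _ s1 s1).
  by apply: Uprime_u1u2u1 => //; apply: subalg1_mul.
- have -> : s2 * t1 * 1 * s1 = 1 * s2 * 1 by rewrite mulr1 -mulrA t1s1 mul1r !mulr1.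
  exact: Uprime_u1u2u1.
have -> : s2 * t1 * s2 * s1 = 1 * s2 * t1 * s2 * s1 by rewrite mul1r.
exact: Uprime_s2t1s2.
Qed.

Lemma Uprime_t2t2_ipow_t2 m : U' (t2 ^+ 2 * ipow s1 t1 m * t2).
Proof.
have hU := Uprime_closed s1 s2 t1 t2.
rewrite (eq_scale_unit du (quartic_sqr s2t2 quartic2)) -!scalerAl.
rewrite !mulrBl !mulrDl -!scalerAl mul1r; closedS_lin hU.
- exact: Uprime_s2s2_ipow_t2.
- exact: Uprime_s2_ipow_t2.
- exact: Uprime_ipow_t2.
- exact: Uprime_t2_ipow_t2.
Qed.

End BraidQuartic.

Theorem lemma3p1 (R : comUnitRingType) (A : algType R) (a b c d : R)
  (s1 s2 t1 t2 : A) :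
  d \is a GRing.unit ->
  s1 * t1 = 1 -> t1 * s1 = 1 -> s2 * t2 = 1 -> t2 * s2 = 1 ->
  s1 * s2 * s1 = s2 * s1 * s2 ->
  s1 ^+ 4 = a *: s1 ^+ 3 + b *: s1 ^+ 2 + c *: s1 + d%:A ->
  s2 ^+ 4 = a *: s2 ^+ 3 + b *: s2 ^+ 2 + c *: s2 + d%:A ->
  forall m : int,
    Ufull s1 s2 t1 t2 (s2 * ipow s1 t1 m * s2) /\
    Uprime s1 s2 t1 t2 (t2 * ipow s1 t1 m * t2) /\
    Uprime s1 s2 t1 t2 (t2 ^+ 2 * ipow s1 t1 m * t2).
Proof.
move=> du s1t1 t1s1 s2t2 t2s2 braid quartic1 quartic2 m.
split; first exact: Ufull_s2_ipow_s2 du s1t1 t1s1 braid quartic1 m.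
split; first exact: Uprime_t2_ipow_t2 du s1t1 t1s1 s2t2 t2s2 braid quartic1 quartic2 m.
exact: Uprime_t2t2_ipow_t2 du s1t1 t1s1 s2t2 t2s2 braid quartic1 quartic2 m.
Qed.
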